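(* In the multi-server distributed computing model $\mathcal{T}(N,K,K_c,M,N_r)$ with cyclic placement of datasets, where $\Delta=K/N\in\mathbb{Z}^+$ and $M=\Delta(N-N_r+1)$, suppose the user demands the single ($K_c=1$) multi-linear function $f(W_{\mathcal{K}})=\prod_{k\in[K]}W_k$ over $\mathbb{F}_2$, and the subfunctions $W_k\sim\mathrm{Bern}(\epsilon)$ are i.i.d. across $k\in[K]$ for some $\epsilon\in(0,1)$. Then characteristic graph-based compression achieves $$R_{\rm ach}\le\frac{1-(\epsilon_M)^{N^*}}{1-\epsilon_M}\,h(\epsilon_M)+(\epsilon_M)^{N^*}\,1_{\Delta_N>0}\,h(\epsilon_{\xi_N}),$$ where $\epsilon_l=\epsilon^l$ is the probability that the product of $l$ distinct subfunctions equals $1$, $N^*=\lfloor N/(N-N_r+1)\rfloor$ is the number of servers that each compute the product of a disjoint set of $M$ subfunctions, $\Delta_N=N-N^*(N-N_r+1)$, and, when $\Delta_N\ge1$, $\xi_N$ is the number of remaining subfunctions (not covered by those $N^*$ servers) whose product is computed by an additional server; $h(\cdot)$ is the binary entropy function and $1_{\Delta_N>0}$ is the indicator that $\Delta_N>0$.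
   Context: Setting: $K$ datasets and $N$ non-cooperating servers $\Omega=[N]$; server $i$ stores datasets with indices $\mathcal{Z}_i$ and holds $X_i=\{W_k\}_{k\in\mathcal{Z}_i}$, $W_k=h_k(D_k)\in\{0,1\}$. Cyclic placement with recovery threshold $N_r$: $\mathcal{Z}_i=\bigcup_{r=0}^{\Delta-1}\{\mathrm{mod}(i,N)+rN,\dots,\mathrm{mod}(i+N-N_r,N)+rN\}$ (convention $\mathrm{mod}(b,a)=a$ if $a\mid b$), so $|\mathcal{Z}_i|=M$ and any $N_r$ servers store all datasets. The user must compute $f$ asymptotically losslessly over long i.i.d. sequences. Each server builds a characteristic graph of $X_i$ (vertices the values of $X_i$, adjacent iff the function value differs for some jointly positive-probability value of the remaining data) and transmits an encoding of a coloring of its OR powers, possibly using previously transmitted servers' information as side information (conditional graph entropy); $R_{\rm ach}$ is the resulting sum of servers' rates. *)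

From HB Require Import structures.
From mathcomp Require Import all_boot all_order all_algebra.
From mathcomp Require Import reals exp.
Set Implicit Arguments. Unset Strict Implicit. Unset Printing Implicit Defensive.
Import Order.TTheory GRing.Theory Num.Theory.
Local Open Scope ring_scope.

(* One realization of the K subfunctions W_1..W_K (0-based indices k : 'I_K),
   each W_k in F_2 = bool. *)
Definition data (K : nat) := {ffun 'I_K -> bool}.

Definition srcP (R : realType) (K : nat) (eps : R) (w : data K) : R :=
  \prod_(k < K) (if w k then eps else 1 - eps).

Definition fprod (K : nat) (w : data K) : bool := \big[andb/true]_(k < K) w k.

Definition cyclicZ (K N Delta Nr : nat) (i : 'I_N) : {set 'I_K} :=
  [set k : 'I_K | [exists r : 'I_Delta, exists t : 'I_(N - Nr).+1,
                    val k == ((i + t) %% N + r * N)%N]].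

(* Value of X_i = {W_k}_{k in Z_i}, represented as the vector masked to Z. *)
Definition obs (K : nat) (Z : {set 'I_K}) (w : data K) : data K :=
  [ffun k => (k \in Z) && w k].

Definition prob (R : realType) (K : nat) (eps : R) (E : pred (data K)) : R :=
  \sum_(w : data K | E w) srcP eps w.

Definition log2 (R : realType) (x : R) : R := ln x / ln 2.

Definition condH (R : realType) (K : nat) (eps : R)
  (V : data K -> nat) (S : data K -> seq nat) : R :=
  - \sum_(w : data K) srcP eps w *
      log2 (prob eps [pred w' | (V w' == V w) && (S w' == S w)] /
            prob eps [pred w' | S w' == S w]).

Definition hbin (R : realType) (p : R) : R :=
  - (p * log2 p) - (1 - p) * log2 (1 - p).

(* A step of a sequential scheme: a server together with its coloring map,
   which colors the server's value, given the previously transmitted colors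
   (side information available to the server and the user). *)
Definition step (K N : nat) := ('I_N * (data K -> seq nat -> nat))%type.

Definition hist (K N : nat) (Z : 'I_N -> {set 'I_K}) (sch : seq (step K N))
  (w : data K) : seq nat :=
  foldl (fun h p => rcons h (p.2 (obs (Z p.1) w) h)) [::] sch.

Definition char_adj (R : realType) (K : nat) (eps : R) (Z : {set 'I_K})
  (S : data K -> seq nat) (h : seq nat) (x x' : data K) : Prop :=
  exists w w' : data K,
    [/\ 0 < srcP eps w, 0 < srcP eps w', obs Z w = x, obs Z w' = x'
      & [/\ S w = h, S w' = h, (forall k, k \notin Z -> w k = w' k)
          & fprod w != fprod w']].

Definition proper_coloring (R : realType) (K : nat) (eps : R) (Z : {set 'I_K})
  (S : data K -> seq nat) (c : data K -> seq nat -> nat) : Prop :=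
  forall h x x', char_adj eps Z S h x x' -> c x h != c x' h.

Definition valid_scheme (R : realType) (K N : nat) (eps : R)
  (Z : 'I_N -> {set 'I_K}) (sch : seq (step K N)) : Prop :=
  [/\ perm_eq (map fst sch) (enum 'I_N),
      (forall s1 p s2, sch = s1 ++ p :: s2 ->
         proper_coloring eps (Z p.1) (hist Z s1) p.2)
    & exists dec : seq nat -> bool,
        forall w, 0 < srcP eps w -> dec (hist Z sch w) = fprod w].

Fixpoint rate_rec (R : realType) (K N : nat) (eps : R) (Z : 'I_N -> {set 'I_K})
  (pre : seq (step K N)) (s : seq (step K N)) : R :=
  match s with
  | [::] => 0
  | p :: s' =>
      condH eps (fun w => p.2 (obs (Z p.1) w) (hist Z pre w)) (hist Z pre)
      + rate_rec eps Z (rcons pre p) s'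
  end.

Definition Rach (R : realType) (K N : nat) (eps : R) (Z : 'I_N -> {set 'I_K})
  (sch : seq (step K N)) : R := rate_rec eps Z [::] sch.

Definition prop3_bound (R : realType) (K N Nr Delta : nat) (eps : R) : R :=
  let M := (Delta * (N - Nr + 1))%N in
  let epsM := eps ^+ M in
  let Nstar := (N %/ (N - Nr + 1))%N in
  let DeltaN := (N - Nstar * (N - Nr + 1))%N in
  let xiN := (K - Nstar * M)%N in
  (1 - epsM ^+ Nstar) / (1 - epsM) * hbin epsM
  + epsM ^+ Nstar * (if (0 < DeltaN)%N then hbin (eps ^+ xiN) else 0).

(* Every server sends one bit: 0 as soon as the earlier bits or its own
   datasets show that the product of all data is 0, and 1 otherwise.  Values
   adjacent in its conditional characteristic graph get different bits, and
   f = 1 exactly when no 0 was sent.  If the earlier servers cover the set U of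
   datasets, the side information is either "some W_k with k in U is 0", after
   which the bit is determined, or "all of U is 1" (probability eps^|U|), after
   which the bit is 1 with conditional probability eps^|Z_i \ U|; the server's
   rate is thus eps^|U| h(eps^|Z_i \ U|).  Scheduling first the servers
   0, L, 2L, ... (L = N - Nr + 1), whose dataset sets of size M are disjoint,
   then server N* L if datasets remain, produces the geometric series of the
   bound; every later server covers nothing new and costs nothing. *)

From Pilot Require Import Defs.
From HB Require Import structures.
From mathcomp Require Import all_boot all_order all_algebra.
From mathcomp Require Import reals exp.
From mathcomp Require Import zify ring.
Import Order.TTheory GRing.Theory Num.Theory.
Local Open Scope ring_scope.
Set Implicit Arguments. Unset Strict Implicit. Unset Printing Implicit Defensive.

Section AllOnes.
Variable K : nat.

Definition all_ones (U : {set 'I_K}) (w : data K) : bool := [forall k in U, w k].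

Lemma all_onesU (A B : {set 'I_K}) w : all_ones (A :|: B) w = all_ones A w && all_ones B w.
Proof.
apply/forallP/andP => [H|[/forallP HA /forallP HB] k].
  split; apply/forallP => k; apply/implyP => kU.
    by have /implyP := H k; apply; rewrite inE kU.
  by have /implyP := H k; apply; rewrite inE kU orbT.
apply/implyP; rewrite inE => /orP[kA|kB].
  by have /implyP := HA k; apply.
by have /implyP := HB k; apply.
Qed.

Lemma all_ones_obs (Z : {set 'I_K}) w : all_ones Z (obs Z w) = all_ones Z w.
Proof. by apply: eq_forallb => k; rewrite ffunE; case: (k \in Z). Qed.

Lemma fprod_all_ones (w : data K) : Defs.fprod w = all_ones setT w.
Proof.
rewrite /Defs.fprod big_all; apply/allP/forallP => [H k|H k _].
  by rewrite in_setT H ?mem_index_enum.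
by have /implyP := H k; apply; rewrite in_setT.
Qed.

Lemma all_ones_setC (Z : {set 'I_K}) (w w' : data K) :
  (forall k, k \notin Z -> w k = w' k) -> all_ones (~: Z) w = all_ones (~: Z) w'.
Proof.
move=> out; apply: eq_forallb => k.
by rewrite inE; case: (boolP (k \in Z)) => //= /out ->.
Qed.

End AllOnes.

Lemma hist_rcons (K N : nat) (Zs : 'I_N -> {set 'I_K}) sch p w :
  hist Zs (rcons sch p) w = rcons (hist Zs sch w) (p.2 (obs (Zs p.1) w) (hist Zs sch w)).
Proof. by rewrite /hist foldl_rcons. Qed.

Section AndSchedule.
Variables (K N : nat) (Zs : 'I_N -> {set 'I_K}).

Definition and_color (Z : {set 'I_K}) (x : data K) (h : seq nat) : nat :=
  (0%N \notin h) && all_ones Z x.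

Definition and_schedule (s : seq 'I_N) : seq (step K N) :=
  [seq (i, and_color (Zs i)) | i <- s].

Definition covered (s : seq 'I_N) : {set 'I_K} := \bigcup_(i <- s) Zs i.

Lemma covered_rcons s i : covered (rcons s i) = covered s :|: Zs i.
Proof. by rewrite /covered big_rcons. Qed.

Lemma covered_cat s1 s2 : covered (s1 ++ s2) = covered s1 :|: covered s2.
Proof. by rewrite /covered big_cat. Qed.

Lemma and_schedule_rcons s i :
  and_schedule (rcons s i) = rcons (and_schedule s) (i, and_color (Zs i)).
Proof. exact: map_rcons. Qed.

Lemma zero_in_hist s w :
  (0%N \in hist Zs (and_schedule s) w) = ~~ all_ones (covered s) w.
Proof.
elim/last_ind: s => [|s i IH].
  by apply/esym/negbF/forallP => k; rewrite /covered big_nil inE.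
rewrite and_schedule_rcons hist_rcons /= mem_rcons in_cons /and_color all_ones_obs.
rewrite covered_rcons all_onesU; move: IH.
by case: (0%N \in _); case: (all_ones (covered s) w); case: (all_ones (Zs i) w).
Qed.

Lemma and_color_hist s i w :
  and_color (Zs i) (obs (Zs i) w) (hist Zs (and_schedule s) w)
  = all_ones (covered (rcons s i)) w.
Proof. by rewrite /and_color zero_in_hist negbK all_ones_obs covered_rcons all_onesU. Qed.

Lemma hist_all_ones s w :
  all_ones (covered s) w -> hist Zs (and_schedule s) w = nseq (size s) 1%N.
Proof.
elim/last_ind: s => [//|s i IH] ones.
rewrite and_schedule_rcons hist_rcons /= and_color_hist ones IH; last first.
  by move: ones; rewrite covered_rcons all_onesU => /andP[].
by rewrite size_rcons -cats1 -[(size s).+1]addn1 nseqD.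
Qed.

(* [fprod] is the colour times the product over the datasets outside [Zs i],
   on which adjacent values agree. *)
Lemma proper_and_color (R : realType) (eps : R) s i :
  proper_coloring eps (Zs i) (hist Zs (and_schedule s)) (and_color (Zs i)).
Proof.
move=> h x x' [w [w' [_ _ <- <- [<- hw' out fdiff]]]].
apply: contra fdiff => /eqP ceq; apply/eqP.
have split_fprod v : Defs.fprod v = all_ones (covered (rcons s i)) v && all_ones (~: Zs i) v.
  by rewrite fprod_all_ones -all_onesU covered_rcons -setUA setUCr setUT.
have := and_color_hist s i w'; rewrite hw' => cw'.
rewrite and_color_hist cw' in ceq; rewrite !split_fprod (all_ones_setC out).
by case: (all_ones _ w) (all_ones _ w') ceq => [] [].
Qed.

Lemma and_schedule_eq_cat s s1 p s2 : and_schedule s = s1 ++ p :: s2 ->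
  exists s1' i, s1 = and_schedule s1' /\ p = (i, and_color (Zs i)).
Proof.
elim: s s1 => [|i s IH] [|x s1] //=; first by case=> <- _; exists [::], i.
by case=> <- /IH [s1' [j [-> ->]]]; exists (i :: s1'), j.
Qed.

Lemma valid_and_schedule (R : realType) (eps : R) s :
  perm_eq s (enum 'I_N) -> covered s = setT -> valid_scheme eps Zs (and_schedule s).
Proof.
move=> perm_s cover_s; split.
- by rewrite -map_comp map_id.
- by move=> s1 p s2 /and_schedule_eq_cat [s1' [i [-> ->]]]; apply: proper_and_color.
- exists (fun h => 0%N \notin h) => w _.
  by rewrite zero_in_hist negbK cover_s fprod_all_ones.
Qed.

End AndSchedule.

Section Entropy.
Variables (R : realType) (K : nat) (eps : R).

Lemma eq_prob (E1 E2 : pred (data K)) : E1 =1 E2 -> prob eps E1 = prob eps E2.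
Proof. by move=> E12; apply: eq_bigl. Qed.

Lemma prob_all_ones (U : {set 'I_K}) : prob eps (all_ones U) = eps ^+ #|U|.
Proof.
pose F k (b : bool) := if b then eps else if k \in U then 0 else 1 - eps.
transitivity (\sum_(w : data K) \prod_k F k (w k)).
  rewrite /prob /srcP big_mkcond /=; apply: eq_bigr => w _.
  case: ifP => [/forallP ones|/negbT].
    apply: eq_bigr => k _; rewrite /F; case: (boolP (k \in U)) => [kU|_]; last by case: (w k).
    by have /implyP/(_ kU) -> := ones k.
  rewrite negb_forall => /existsP[k]; rewrite negb_imply => /andP[kU wk].
  by rewrite (bigD1 k) //= /F kU (negbTE wk) mul0r.
rewrite -bigA_distr_bigA /= -prodr_const [RHS]big_mkcond /=.
by apply: eq_bigr => k _; rewrite big_bool /F; case: (k \in U) => /=; rewrite ?addr0 ?subrKC.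
Qed.

(* Also for [x = 0], since [0 / 0 = 0] and [ln 0 = 0]. *)
Lemma log2_divff (x : R) : log2 (x / x) = 0.
Proof.
have [->|x0] := eqVneq x 0; first by rewrite mul0r /log2 ln0 ?mul0r.
by rewrite divff // /log2 ln1 mul0r.
Qed.

Lemma entropy_split (p q : R) : p != 0 ->
  - (q * log2 (q / p) + (p - q) * log2 ((p - q) / p)) = p * hbin (q / p).
Proof.
move=> p0; rewrite /hbin.
have -> : (p - q) / p = 1 - q / p by rewrite mulrBl divff.
have -> : p - q = p * (1 - q / p) by rewrite mulrBr mulr1 mulrCA divff // mulr1.
have {1}-> : q = p * (q / p) by rewrite mulrCA divff // mulr1.
by move: (q / p) => a; ring.
Qed.

(* Outside [A] the side information [S] determines [V]; on [A] it is constant,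
   so only the split of [A] by [B] costs entropy. *)
Lemma condH_refine (V : data K -> nat) (S : data K -> seq nat) (A B : pred (data K)) :
  (forall w w', S w' = S w -> A w' = A w) ->
  (forall w w', A w -> A w' -> S w' = S w) ->
  (forall w, V w = A w && B w) ->
  prob eps A != 0 ->
  condH eps V S = prob eps A * hbin (prob eps [pred w | A w && B w] / prob eps A).
Proof.
move=> S_A A_S VAB pA0.
set p := prob eps A; set q := prob eps [pred w | A w && B w].
have pAnB : prob eps [pred w | A w && ~~ B w] = p - q.
  by rewrite /p /q /prob [X in _ = X - _](bigID B) /= addrAC subrr add0r.
rewrite -entropy_split // /condH; congr (- _).
transitivity (\sum_(w : data K) srcP eps w *
    (if A w then if B w then log2 (q / p) else log2 ((p - q) / p) else 0)); last first.
  rewrite -pAnB /q /prob !mulr_suml [in RHS]big_mkcond [X in _ = _ + X]big_mkcond.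
  rewrite -big_split /=; apply: eq_bigr => w _.
  by case: (A w); case: (B w); rewrite /= ?mulr0 ?addr0 ?add0r.
apply: eq_bigr => w _; congr (_ * _); case Aw: (A w); last first.
  rewrite -[RHS](log2_divff (prob eps [pred w' | S w' == S w])).
  congr (log2 (_ / _)); apply: eq_prob => w' /=.
  case: (S w' =P S w) => [eqS|]; last by rewrite andbF.
  by rewrite !VAB (S_A _ _ eqS) Aw.
have eqS w' : (S w' == S w) = A w' by apply/eqP/idP => [/S_A ->|/A_S ->].
rewrite [X in _ / X](@eq_prob _ A); last exact: eqS.
case Bw: (B w); [rewrite /q | rewrite -pAnB]; congr (log2 (_ / _)); apply: eq_prob => w' /=.
all: by rewrite eqS !VAB Aw Bw; case: (A w'); case: (B w').
Qed.

End Entropy.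

Lemma hbin1 (R : realType) : hbin (1 : R) = 0.
Proof. by rewrite /hbin /log2 ln1 subrr !mul0r mulr0 oppr0 addr0. Qed.

Section AndRate.
Variables (R : realType) (eps : R) (K N : nat) (Zs : 'I_N -> {set 'I_K}).
Hypothesis eps_neq0 : eps != 0.

Local Notation covered := (covered Zs).

Fixpoint and_rate (pre s : seq 'I_N) : R :=
  if s is i :: s' then
    eps ^+ #|covered pre| * hbin (eps ^+ (#|covered (rcons pre i)| - #|covered pre|))
    + and_rate (rcons pre i) s'
  else 0.

Lemma condH_and_color s i :
  condH eps (fun w => and_color (Zs i) (obs (Zs i) w) (hist Zs (and_schedule Zs s) w))
    (hist Zs (and_schedule Zs s))
  = eps ^+ #|covered s| * hbin (eps ^+ (#|covered (rcons s i)| - #|covered s|)).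
Proof.
rewrite (condH_refine (A := all_ones (covered s)) (B := all_ones (Zs i))).
- rewrite [prob _ [pred w | _]](@eq_prob _ _ _ _ (all_ones (covered (rcons s i)))); last first.
    by move=> w; rewrite /= covered_rcons all_onesU.
  rewrite !prob_all_ones -expfB_cond // (negbTE eps_neq0) add0n covered_rcons.
  exact/subset_leq_card/subsetUl.
- by move=> w w' hw'; rewrite -[LHS]negbK -zero_in_hist hw' zero_in_hist negbK.
- by move=> w w' Aw Aw'; rewrite !hist_all_ones.
- by move=> w; rewrite and_color_hist covered_rcons all_onesU.
- by rewrite prob_all_ones expf_neq0.
Qed.

Lemma rate_and_schedule pre s :
  rate_rec eps Zs (and_schedule Zs pre) (and_schedule Zs s) = and_rate pre s.
Proof.
elim: s pre => [//|i s IH] pre /=.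
by rewrite -and_schedule_rcons IH condH_and_color.
Qed.

Lemma Rach_and_schedule s : Rach eps Zs (and_schedule Zs s) = and_rate [::] s.
Proof. exact: (rate_and_schedule [::]). Qed.

Lemma and_rate_cat pre s1 s2 :
  and_rate pre (s1 ++ s2) = and_rate pre s1 + and_rate (pre ++ s1) s2.
Proof.
elim: s1 pre => [|i s1 IH] pre /=; first by rewrite add0r cats0.
by rewrite IH addrA cat_rcons.
Qed.

Lemma and_rate_covered pre s : covered pre = setT -> and_rate pre s = 0.
Proof.
elim: s pre => [//|i s IH] pre cover_pre /=.
have cover_pre_i : covered (rcons pre i) = setT by rewrite covered_rcons cover_pre setTU.
by rewrite IH // cover_pre_i cover_pre subnn expr0 hbin1 mulr0 addr0.
Qed.

End AndRate.

Lemma card_mod_lt (D N m : nat) : (m <= N)%N ->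
  #|[set k : 'I_(D * N) | (k %% N < m)%N]| = (D * m)%N.
Proof.
move=> mN; rewrite -sum1_card big_mkcond /=.
have -> : (\sum_(k < D * N) (if k \in [set k : 'I_(D * N) | (k %% N < m)%N] then 1 else 0)
          = \sum_(0 <= k < D * N) (k %% N < m : nat))%N.
  by rewrite big_mkord; apply: eq_bigr => k _; rewrite inE; case: ifP.
have period_sum : (\sum_(0 <= k < N) (k < m : nat) = m)%N.
  rewrite (@big_cat_nat _ _ _ m 0 N _ _ (leq0n m) mN) /= (@eq_big_nat _ _ _ 0 m _ (fun=> 1%N)).
    rewrite sum_nat_const_nat big1_seq ?subn0 ?muln1 ?addn0 // => k.
    by rewrite mem_index_iota => /andP[_ /andP[mk _]]; rewrite ltnNge mk.
  by move=> k /andP[_ ->].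
elim: D => [|D IH]; first by rewrite big_geq.
rewrite mulSnr (@big_cat_nat _ _ _ (D * N) 0 (D * N + N) _ _ (leq0n _) (leq_addr _ _)) /=.
rewrite IH mulSnr; congr (_ + _)%N.
rewrite -{1}(add0n (D * N)%N) big_addn addKn -[RHS]period_sum.
by apply: eq_big_nat => k /andP[_ kN]; rewrite addnC modnMDl modn_small.
Qed.

Lemma geometric_hbin (R : realType) (x : R) k : x != 1 ->
  \sum_(i < k) x ^+ i * hbin x = (1 - x ^+ k) / (1 - x) * hbin x.
Proof.
move=> x1; rewrite -mulr_suml; congr (_ * _).
rewrite -opprB -[1 - x]opprB invrN mulrNN subrX1 mulrC mulKf //.
by rewrite subr_eq0.
Qed.

Lemma iota0S n : iota 0 n.+1 = rcons (iota 0 n) n.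
Proof. by rewrite -[n.+1]addn1 iotaD cats1. Qed.

Section CyclicCover.
Variables (n Delta Nr : nat).

Local Notation N := n.+1.
Local Notation K := (Delta * N)%N.
Local Notation Z := (cyclicZ K Delta Nr).
Local Notation L := (N - Nr + 1)%N.
Local Notation Ns := (N %/ L)%N.

Lemma mem_cyclicZ_window (i : 'I_N) (k : 'I_K) : (i <= k %% N < i + L)%N -> k \in Z i.
Proof.
move=> /andP[ik kiL]; rewrite inE.
have r_lt : (k %/ N < Delta)%N by rewrite ltn_divLR // mulnC.
have t_lt : (k %% N - i < (N - Nr).+1)%N by lia.
apply/existsP; exists (Ordinal r_lt); apply/existsP; exists (Ordinal t_lt) => /=.
by rewrite subnKC // modn_mod addnC -divn_eq.
Qed.

Lemma mem_cyclicZ (i : 'I_N) (k : 'I_K) :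
  (i + L <= N)%N -> (k \in Z i) = (i <= k %% N < i + L)%N.
Proof.
move=> iL; apply/idP/idP; last exact: mem_cyclicZ_window.
rewrite inE => /existsP[r /existsP[t /eqP ->]].
have t_lt := ltn_ord t; rewrite addnC modnMDl modn_mod modn_small; lia.
Qed.

Lemma L_gt0 : (0 < L)%N. Proof. by rewrite addn1. Qed.

Lemma Ns_bounds : (Ns * L <= N < Ns * L + L)%N.
Proof. by rewrite leq_divM /= {1}(divn_eq N L) ltn_add2l ltn_pmod // L_gt0. Qed.

Definition block_start (j : nat) : 'I_N := inord (j * L).

Local Notation n_cover := (Ns + (0 < N - Ns * L))%N.

Definition cover_servers : seq 'I_N := map block_start (iota 0 n_cover).

Lemma block_start_val j : (j * L < N)%N -> val (block_start j) = (j * L)%N.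
Proof. exact: inordK. Qed.

Lemma block_start_lt j : (j < n_cover)%N -> (j * L < N)%N.
Proof.
have [jNs _|NsJ] := ltnP j Ns.
  by have := leq_mul jNs (leqnn L); rewrite mulSnr; have := L_gt0; lia.
case: (ltnP 0 (N - Ns * L)) => rem jc; last by lia.
by rewrite subn_gt0 in rem; rewrite (_ : j = Ns) //; lia.
Qed.

Lemma covered_blocks j : (j <= Ns)%N ->
  covered Z (map block_start (iota 0 j)) = [set k : 'I_K | (k %% N < j * L)%N].
Proof.
elim: j => [|j IH] jNs; first by apply/setP => k; rewrite /covered big_nil !inE.
have jL_le : (j * L + L <= N)%N.
  by have := leq_mul jNs (leqnn L); rewrite mulSnr; case/andP: Ns_bounds; lia.
have jL_lt : (j * L < N)%N by have := L_gt0; lia.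
rewrite iota0S map_rcons covered_rcons (IH (ltnW jNs)).
apply/setP => k; rewrite in_setU mem_cyclicZ block_start_val // !inE; lia.
Qed.

Lemma covered_cover_servers : covered Z cover_servers = setT.
Proof.
have modN (k : 'I_K) : (k %% N < N)%N by rewrite ltn_pmod.
rewrite /cover_servers; case: ltnP => [rem|]; last first.
  rewrite addn0 covered_blocks // => NsL.
  by apply/setP => k; rewrite !inE; have := modN k; lia.
rewrite -[(Ns + true)%N]/(Ns + 1)%N addn1 iota0S map_rcons covered_rcons covered_blocks //.
apply/setP => k; rewrite in_setT in_setU inE; case: ltnP => //= NsLk.
apply: mem_cyclicZ_window; rewrite block_start_val ?NsLk; last by rewrite -subn_gt0.
by case/andP: Ns_bounds => _; apply: ltn_trans (modN k).
Qed.

Lemma uniq_cover_servers : uniq cover_servers.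
Proof.
rewrite map_inj_in_uniq ?iota_uniq // => j1 j2; rewrite !mem_iota !add0n => j1c j2c /(congr1 val).
by rewrite !block_start_val ?block_start_lt // => /eqP; rewrite eqn_pmul2r ?L_gt0 // => /eqP.
Qed.

Variables (R : realType) (eps : R).

Local Notation M := (Delta * L)%N.

Lemma and_rate_blocks j : (j <= Ns)%N ->
  and_rate eps Z [::] (map block_start (iota 0 j))
  = \sum_(i < j) (eps ^+ M) ^+ i * hbin (eps ^+ M).
Proof.
elim: j => [|j IH] jNs; first by rewrite big_ord0.
have jL_le : (j.+1 * L <= N)%N.
  by have := leq_mul jNs (leqnn L); case/andP: Ns_bounds; lia.
have jL_le' : (j * L <= N)%N by apply: leq_trans jL_le; rewrite leq_mul2r leqnSn orbT.
rewrite big_ord_recr iota0S map_rcons -cats1 and_rate_cat (IH (ltnW jNs)) /=; congr (_ + _).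
rewrite addr0 -map_rcons -iota0S !covered_blocks ?(ltnW jNs) // !card_mod_lt //.
by rewrite -mulnBr -mulnBl subSnn mul1n -exprM mulnCA mulnC.
Qed.

Lemma and_rate_cover_servers : 0 < eps -> eps < 1 -> (0 < Delta)%N ->
  and_rate eps Z [::] cover_servers = prop3_bound K N Nr Delta eps.
Proof.
move=> eps_gt0 eps_lt1 Delta_gt0.
have epsM1 : eps ^+ M != 1.
  by rewrite lt_eqF // exprn_ilt1 ?ltW // -lt0n muln_gt0 Delta_gt0 L_gt0.
have epsNs : (eps ^+ M) ^+ Ns = eps ^+ (Delta * (Ns * L)) by rewrite -exprM mulnCA mulnC.
rewrite /prop3_bound /cover_servers; case: ltnP => [rem|_] /=; last first.
  by rewrite addn0 and_rate_blocks // geometric_hbin // mulr0 addr0.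
have cover_all := covered_cover_servers; rewrite /cover_servers rem in cover_all.
rewrite -[(Ns + true)%N]/(Ns + 1)%N addn1 in cover_all *.
rewrite iota0S map_rcons -cats1 and_rate_cat and_rate_blocks // geometric_hbin //=.
rewrite -map_rcons -iota0S cover_all covered_blocks // card_mod_lt ?leq_divM //.
by rewrite cardsT card_ord addr0 epsNs mulnCA.
Qed.

End CyclicCover.

Lemma perm_completion (T : finType) (s : seq T) :
  uniq s -> perm_eq (s ++ [seq i <- enum T | i \notin s]) (enum T).
Proof.
move=> s_uniq; apply: uniq_perm; rewrite ?enum_uniq //.
  rewrite cat_uniq s_uniq filter_uniq ?enum_uniq // andbT.
  by apply/hasPn => i; rewrite mem_filter => /andP[].
by move=> i; rewrite mem_cat mem_filter mem_enum andbT orbN.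
Qed.

Unset Implicit Arguments.

Theorem proposition3 (R : realType) (N K Nr Delta : nat) (eps : R) :
  (0 < Nr)%N -> (Nr <= N)%N -> (0 < Delta)%N -> K = (Delta * N)%N ->
  0 < eps -> eps < 1 ->
  exists sch : seq (step K N),
    valid_scheme eps (cyclicZ K Delta Nr) sch /\
    Rach eps (cyclicZ K Delta Nr) sch <= prop3_bound K N Nr Delta eps.
Proof.
move=> Nr_gt0 Nr_le Delta_gt0 -> eps_gt0 eps_lt1.
case: N Nr_le => [|n] Nr_le; first by case: Nr Nr_gt0 Nr_le.
set s := cover_servers n Nr.
exists (and_schedule (cyclicZ _ Delta Nr) (s ++ [seq i <- enum 'I_n.+1 | i \notin s])); split.
  apply: valid_and_schedule; first exact/perm_completion/uniq_cover_servers.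
  by rewrite covered_cat covered_cover_servers // setTU.
rewrite Rach_and_schedule ?lt0r_neq0 // and_rate_cat [X in _ + X]and_rate_covered; last first.
  by rewrite cat0s covered_cover_servers.
by rewrite addr0 and_rate_cover_servers.
Qed.
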